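(* Let $d^{AB}_n$ denote the number of signed derangements $\sigma\in B_n$ with $\ell_B(\sigma)$ even. Then: (i) for $n\ge 1$, $d^{AB}_n=n!\sum_{k=0}^{n-1}\frac{2^{n-k-1}(-1)^k}{k!}+(-1)^n$; (ii) for $n\ge 2$, $d^{AB}_n=2n\,d^{AB}_{n-1}+(-1)^n(n+1)$, with $d^{AB}_1=0$; (iii) for $n\ge 3$, $d^{AB}_n=(n-1)\big(2d^{AB}_{n-1}+4d^{AB}_{n-2}+(-1)^{n-1}\big)$, with $d^{AB}_1=0$, $d^{AB}_2=3$.
   Context: $B_n$ is the hyperoctahedral group: its elements are words $\sigma=\sigma_1\cdots\sigma_n$ with $\sigma_i\in\{\pm1,\dots,\pm n\}$ such that $|\sigma_1|\cdots|\sigma_n|$ is a permutation of $[n]$. A (signed) derangement is an element with $\sigma_i\ne i$ for all $i$. $\mathrm{inv}(\sigma)=\#\{(i,j):i<j,\ \sigma_i>\sigma_j\}$ with respect to the usual order of integers, and the length is $\ell_B(\sigma)=\mathrm{inv}(\sigma)-\sum_{i:\sigma_i<0}\sigma_i$. *)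

From mathcomp Require Import all_boot all_order fingroup perm all_algebra.
Set Implicit Arguments. Unset Strict Implicit. Unset Printing Implicit Defensive.
Import Order.TTheory GRing.Theory Num.Theory.
Local Open Scope ring_scope.

(* A signed permutation of [n] (an element of B_n) is encoded as a pair
   (p, e) with p a permutation of 'I_n (0-indexed) and e a sign vector;
   e i = true means the i-th letter is negative.  The i-th letter
   (1-indexed position i+1) is  sigma_{i+1} = +/- (p i + 1). *)
Definition signed_perm (n : nat) : finType :=
  ({perm 'I_n} * {ffun 'I_n -> bool})%type.

Definition sletter n (s : signed_perm n) (i : 'I_n) : int :=
  if s.2 i then - (Posz (s.1 i).+1) else Posz (s.1 i).+1.

Definition sderangement n (s : signed_perm n) : bool :=
  [forall i : 'I_n, sletter s i != Posz i.+1].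

Definition inv_B n (s : signed_perm n) : nat :=
  #|[set ij : 'I_n * 'I_n | (ij.1 < ij.2)%N && (sletter s ij.2 < sletter s ij.1)]|.

Definition lengthB n (s : signed_perm n) : int :=
  Posz (inv_B s) - \sum_(i : 'I_n | sletter s i < 0) sletter s i.

Definition dAB (n : nat) : nat :=
  #|[set s : signed_perm n | sderangement s && (2 %| `|lengthB s|)%N]|.

From mathcomp Require Import all_boot all_order fingroup perm all_algebra.
From mathcomp Require Import zify ring.
Import Order.TTheory GRing.Theory Num.Theory.
Set Implicit Arguments. Unset Strict Implicit. Unset Printing Implicit Defensive.
Local Open Scope ring_scope.

(* Modulo 2, ell_B(sigma) = inv|sigma| + neg(sigma): a negative letter -sigma_i
   contributes |sigma_i| = 1 + #{j : |sigma_j| < |sigma_i|}, and pair by pair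
   these rank counts turn the inversions of sigma into those of |sigma|.  Hence
   2 d_n = sum over derangements of 1 + (-1)^inv|sigma| (-1)^neg(sigma), and for
   a fixed |sigma| = p the sum over the sign vector factorises position by
   position: it is prod_i (1 + [p i != i]) for the first term and
   (-1)^inv p prod_i ([p i != i] - 1) for the second, which vanishes unless
   p = 1.  Inclusion-exclusion over the fixed points evaluates the first sum to
   sum_k (-1)^k C(n,k) (n-k)! 2^(n-k), and all three statements follow. *)

Lemma sum_ord_ltn (N m : nat) : (\sum_(k < N) (k < m)%N = minn m N)%N.
Proof.
elim: N => [|N IH]; first by rewrite big_ord0; lia.
rewrite big_ord_recr /= IH; case: ltnP => h; lia.
Qed.

Lemma sum_perm_lt n (p : {perm 'I_n}) i : (\sum_j (p j < p i)%N)%N = p i.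
Proof.
rewrite (reindex_inj (@perm_inj _ p^-1)) /=.
under eq_bigr => j _ do rewrite permKV.
rewrite sum_ord_ltn; have := ltn_ord (p i); lia.
Qed.

Lemma card_set_sum (T : finType) (P : pred T) : #|[set x | P x]| = (\sum_x P x)%N.
Proof.
by rewrite -sum1_card big_mkcond /=; apply: eq_bigr => x _; rewrite inE; case: (P x).
Qed.

Lemma odd_sum_eq (I : finType) (F G : I -> nat) :
  (forall i, odd (F i) = odd (G i)) -> odd (\sum_i F i) = odd (\sum_i G i).
Proof.
move=> FG; apply: (big_ind2 (fun a b => odd a = odd b)) => // a b c d ac bd.
by rewrite !oddD ac bd.
Qed.

Lemma sum_pair_split (I : finType) (X : I -> I -> nat) (ord : I -> nat) :
  injective ord ->
  (\sum_(ij : I * I) X ij.1 ij.2 =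
   \sum_(ij : I * I) ((ord ij.1 < ord ij.2)%N * (X ij.1 ij.2 + X ij.2 ij.1))
   + \sum_i X i i)%N.
Proof.
move=> ord_inj.
have trichotomy (ij : I * I) : X ij.1 ij.2 =
    ((ord ij.1 < ord ij.2)%N * X ij.1 ij.2 + (ord ij.2 < ord ij.1)%N * X ij.1 ij.2
     + (ij.1 == ij.2) * X ij.1 ij.2)%N.
  case: ij => i j /=; case: (ltngtP (ord i) (ord j)) => [lt|lt|/ord_inj ->];
    [| |by rewrite eqxx; lia];
    (suff /negbTE -> : i != j by lia); by apply/eqP => ij; rewrite ij ltnn in lt.
rewrite (eq_bigr _ (fun ij _ => trichotomy ij)) !big_split /=; congr (_ + _).
  under [RHS]eq_bigr => ij _ do rewrite mulnDr.
  rewrite big_split /=; congr (_ + _).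
  by rewrite (reindex_inj (can_inj (@swap_pairK I I))).
rewrite -(pair_bigA _ (fun i j => ((i == j) * X i j)%N)) /=; apply: eq_bigr => i _.
rewrite (bigD1 i) //= eqxx mul1n big1 ?addn0 // => j.
by rewrite eq_sym => /negbTE ->.
Qed.

(* A pair of positions i < j with |sigma_i| = a+1, |sigma_j| = b+1 and signs
   ei, ej: its inversion in sigma plus its contributions to the negative
   letters' ranks has the parity of its inversion in |sigma|. *)
Lemma odd_signed_inversion (a b : nat) (ei ej : bool) : a != b ->
  odd (((if ej then - Posz b.+1 else Posz b.+1) < (if ei then - Posz a.+1 else Posz a.+1))%R
       + (ei && (b < a)%N) + (ej && (a < b)%N))%N = odd (b < a)%N.
Proof.
move=> /negPf neq_ab; case: ei; case: ej; case: (ltngtP a b) => lt //=.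
all: try by rewrite lt eqxx in neq_ab.
all: by case: (boolP (_ < _)%R) => cmp //=; lia.
Qed.

Lemma sletter_lt0 n (s : signed_perm n) i : (sletter s i < 0) = s.2 i.
Proof. by rewrite /sletter; case: (s.2 i) => /=; lia. Qed.

Lemma lengthBE n (s : signed_perm n) :
  lengthB s = Posz (inv_B s + \sum_(i | s.2 i) (s.1 i).+1)%N.
Proof.
rewrite /lengthB PoszD (big_morph Posz PoszD (erefl _)) -sumrN; congr (_ + _).
rewrite (eq_bigl (fun i => s.2 i)) => [|i]; last by rewrite sletter_lt0.
by apply: eq_bigr => i neg_i; rewrite /sletter neg_i opprK.
Qed.

Definition inv_perm n (p : {perm 'I_n}) : nat :=
  (\sum_(ij : 'I_n * 'I_n) ((ij.1 < ij.2)%N && (p ij.2 < p ij.1)%N))%N.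

Definition card_neg n (s : signed_perm n) : nat := (\sum_i s.2 i)%N.

Lemma odd_lengthB n (s : signed_perm n) :
  odd `|lengthB s| = odd (inv_perm s.1 + card_neg s).
Proof.
rewrite lengthBE /= /inv_B card_set_sum.
have -> : (\sum_(i | s.2 i) (s.1 i).+1 = card_neg s
     + \sum_(ij : 'I_n * 'I_n) (s.2 ij.1 && (s.1 ij.2 < s.1 ij.1)%N))%N.
  rewrite big_mkcond -(pair_bigA _ (fun i j => (s.2 i && (s.1 j < s.1 i)%N : nat))) /=.
  rewrite /card_neg -big_split /=; apply: eq_bigr => i _.
  by case: (s.2 i) => /=; [rewrite add1n sum_perm_lt | rewrite big1].
rewrite addnCA [in RHS]addnC !oddD; congr (_ (+) _).
rewrite -oddD -big_split /= /inv_perm.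
set X := fun i j : 'I_n =>
  (((i < j)%N && (sletter s j < sletter s i)%R) + (s.2 i && (s.1 j < s.1 i)%N))%N.
set Y := fun i j : 'I_n => ((i < j)%N && (s.1 j < s.1 i)%N : nat).
rewrite (sum_pair_split X (@ord_inj n)) (sum_pair_split Y (@ord_inj n)).
rewrite [\sum_i X i i]big1 => [|i _]; last by rewrite /X !ltnn andbF.
rewrite [\sum_i Y i i]big1 => [|i _]; last by rewrite /Y ltnn.
rewrite !addn0; apply: odd_sum_eq => -[i j] /=.
case: (ltnP i j) => [lt_ij|]; last by rewrite !mul0n.
rewrite !mul1n /X /Y lt_ij [(j < i)%N]ltnNge (ltnW lt_ij) /= ?addn0.
have neq_ij : (s.1 i : nat) != s.1 j.
  by rewrite (inj_eq val_inj) (inj_eq perm_inj); apply: contraTneq lt_ij => ->; rewrite ltnn.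
by rewrite /sletter (odd_signed_inversion (s.2 i) (s.2 j) neq_ij).
Qed.

Lemma prodr_nat_bool (R : comPzSemiRingType) (I : finType) (A P : pred I) :
  \prod_(i | A i) ((P i)%:R : R) = ([forall (i | A i), P i])%:R.
Proof.
have [/forallP AP|/forallPn [i]] := boolP [forall (i | A i), P i].
  by rewrite big1 // => i Ai; move: (AP i); rewrite Ai /= => ->.
by rewrite negb_imply => /andP [Ai /negbTE nPi]; rewrite (bigD1 i) //= nPi mul0r.
Qed.

Definition incl_excl_sum (R : comNzRingType) n : R :=
  \sum_(k < n.+1) ('C(n, k) * (n - k)`! * 2 ^ (n - k))%:R * (-1) ^+ k.

Section SignedDerangementSums.
Variables (R : comNzRingType) (n : nat).

Lemma sderangementE (p : {perm 'I_n}) (e : {ffun 'I_n -> bool}) :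
  ((sderangement ((p, e) : signed_perm n))%:R : R) = \prod_i ((e i || (p i != i))%:R).
Proof.
rewrite (@prodr_nat_bool _ _ xpredT (fun i => e i || (p i != i))) /sderangement.
congr (nat_of_bool _)%:R; apply: eq_forallb => i.
by rewrite /sletter /=; case: (e i) => /=; [lia | rewrite eqz_nat eqSS].
Qed.

Lemma sum_ffun_bool_prod (F : 'I_n -> bool -> R) :
  \sum_(e : {ffun 'I_n -> bool}) \prod_i F i (e i) = \prod_i (F i true + F i false).
Proof. by rewrite -bigA_distr_bigA; apply: eq_bigr => i _; rewrite big_bool. Qed.

Lemma sum_signed_perm (F : signed_perm n -> R) :
  \sum_(s : signed_perm n) F s = \sum_(p : {perm 'I_n}) \sum_(e : {ffun 'I_n -> bool}) F (p, e).
Proof. by rewrite pair_bigA; apply: eq_bigr => -[p e]. Qed.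

Lemma twice_dAB :
  2 * ((dAB n)%:R : R) = \sum_(p : {perm 'I_n}) \prod_i (1 + (p i != i)%:R)
     + \sum_(p : {perm 'I_n}) (-1) ^+ inv_perm p * \prod_i (-1 + (p i != i)%:R).
Proof.
rewrite /dAB card_set_sum natr_sum mulr_sumr.
have even_indicator (s : signed_perm n) :
    2 * ((sderangement s && (2 %| `|lengthB s|)%N)%:R : R) =
    (sderangement s)%:R + (sderangement s)%:R * (-1) ^+ (inv_perm s.1 + card_neg s).
  rewrite -signr_odd -odd_lengthB signr_odd dvdn2.
  case: (sderangement s); last by rewrite mulr0 mul0r addr0.
  by rewrite mul1r -signr_odd; case: odd; rewrite ?expr1 ?subrr ?mulr0 ?expr0 ?mulr1.
rewrite (eq_bigr _ (fun s _ => even_indicator s)) big_split /= !sum_signed_perm.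
congr (_ + _); apply: eq_bigr => p _.
  rewrite (eq_bigr _ (fun e _ => sderangementE p e)).
  by rewrite (sum_ffun_bool_prod (fun i b => ((b || (p i != i))%:R : R))).
rewrite (eq_bigr (fun e : {ffun 'I_n -> bool} => (-1) ^+ inv_perm p *
    \prod_i (((e i || (p i != i))%:R : R) * (-1) ^+ (e i)))) => [|e _]; last first.
  rewrite sderangementE exprD /card_neg /=.
  rewrite (big_morph (fun k => (-1) ^+ k : R) (fun a b => exprD _ a b) (expr0 _)).
  by rewrite mulrCA -big_split.
rewrite -mulr_sumr (sum_ffun_bool_prod (fun i b => ((b || (p i != i))%:R : R) * (-1) ^+ b)).
by congr (_ * _); apply: eq_bigr => i _; rewrite /= expr1 expr0 mulr1 mulrN1.
Qed.

Lemma sum_sign_prod_moved :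
  \sum_(p : {perm 'I_n}) (-1) ^+ inv_perm p * \prod_i (-1 + (p i != i)%:R) = (-1) ^+ n :> R.
Proof.
rewrite (bigD1 1%g) //= [X in _ + X]big1 ?addr0 => [|p p_neq1]; last first.
  have [i moved_i|fixed] := pickP (fun i => p i != i).
    by rewrite (bigD1 i) //= moved_i addrC subrr mul0r mulr0.
  by case/eqP: p_neq1; apply/permP => i; rewrite perm1; apply/eqP/negbFE/fixed.
have -> : inv_perm (1%g : {perm 'I_n}) = 0%N.
  by apply: big1 => -[i j] _; rewrite !perm1 /=; case: ltngtP.
rewrite expr0 mul1r (eq_bigr (fun _ => -1)) => [|i _]; last by rewrite perm1 eqxx addr0.
by rewrite prodr_const card_ord.
Qed.

Lemma card_setC_ord (J : {set 'I_n}) : #|~: J| = (n - #|J|)%N.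
Proof. by have := cardsC J; rewrite card_ord; lia. Qed.

(* Inclusion-exclusion: expand 1 + [p i != i] = 2 - [p i == i]. *)
Lemma prod_moved_incl_excl (p : {perm 'I_n}) :
  \prod_i (1 + (p i != i)%:R) = \sum_(J : {set 'I_n})
    (-1) ^+ #|J| * 2 ^+ (n - #|J|) * (([forall (i | i \in J), p i == i])%:R : R).
Proof.
rewrite (eq_bigr (fun i => - (p i == i)%:R + 2)) => [|i _]; last first.
  by case: (p i == i) => /=; ring.
rewrite (@bigA_distr R 0 1 *%R +%R _ (fun i => - ((p i == i)%:R : R)) (fun _ => 2)).
apply: eq_bigr => J _.
rewrite big_if /= prodrN (@prodr_nat_bool _ _ (fun i => i \in J) (fun i => p i == i)).
rewrite prodr_const -card_setC_ord cardsE; ring.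
Qed.

Lemma sum_set_by_card (f : nat -> R) :
  \sum_(J : {set 'I_n}) f #|J| = \sum_(k < n.+1) 'C(n, k)%:R * f k.
Proof.
rewrite (partition_big (fun J : {set 'I_n} => (inord #|J| : 'I_n.+1)) xpredT) //=.
apply: eq_bigr => k _.
rewrite (eq_bigl (fun J : {set 'I_n} => #|J| == k)) => [|J]; last first.
  by rewrite -val_eqE /= inordK // ltnS -[X in (_ <= X)%N](card_ord n) max_card.
rewrite (eq_bigr (fun _ => f k)) => [|J /eqP ->] //.
rewrite sumr_const mulr_natl; congr (_ *+ _).
by have := card_draws 'I_n k; rewrite card_ord cardsE => <-.
Qed.

Lemma card_perm_fixing (J : {set 'I_n}) :
  (\sum_(p : {perm 'I_n}) [forall (i | i \in J), p i == i])%N = (n - #|J|)`!.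
Proof.
rewrite -card_setC_ord -card_perm -sum1_card [RHS]big_mkcond /=; apply: eq_bigr => p _.
suff -> : [forall (i | i \in J), p i == i] = perm_on (~: J) p by [].
apply/forallP/subsetP => [fixJ x|onCJ x]; rewrite ?inE.
  by apply: contra => xJ; exact: (implyP (fixJ x) xJ).
by apply/implyP => xJ; apply: contraTT xJ => moved; have := onCJ x; rewrite !inE => ->.
Qed.

Lemma sum_prod_moved :
  \sum_(p : {perm 'I_n}) \prod_i (1 + (p i != i)%:R) = incl_excl_sum R n.
Proof.
rewrite (eq_bigr _ (fun p _ => prod_moved_incl_excl p)) exchange_big /=.
under eq_bigr => J _ do rewrite -mulr_sumr -natr_sum card_perm_fixing.
rewrite (sum_set_by_card (fun k => (-1) ^+ k * 2 ^+ (n - k) * ((n - k)`!)%:R)).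
by apply: eq_bigr => k _; rewrite !natrM natrX; ring.
Qed.

End SignedDerangementSums.

Lemma twice_dABE (R : comNzRingType) n :
  2 * ((dAB n)%:R : R) = incl_excl_sum R n + (-1) ^+ n.
Proof. by rewrite twice_dAB sum_prod_moved sum_sign_prod_moved. Qed.

Lemma bin_fact_pow2S n k : (k <= n)%N ->
  ('C(n.+1, k) * (n.+1 - k)`! * 2 ^ (n.+1 - k)
   = 2 * n.+1 * ('C(n, k) * (n - k)`! * 2 ^ (n - k)))%N.
Proof.
move=> le_kn; rewrite subSn // expnS.
have binS : ('C(n.+1, k) * (n.+1 - k)`! = n.+1 * ('C(n, k) * (n - k)`!))%N.
  apply/eqP; rewrite -(eqn_pmul2l (fact_gt0 k)); apply/eqP.
  transitivity ('C(n.+1, k) * (k`! * (n.+1 - k)`!))%N; first ring.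
  by rewrite bin_fact ?(leqW le_kn) // factS -(bin_fact le_kn); ring.
by rewrite -subSn // mulnA binS; lia.
Qed.

Lemma incl_excl_sumS (R : comNzRingType) n :
  incl_excl_sum R n.+1 = 2 * n.+1%:R * incl_excl_sum R n + (-1) ^+ n.+1.
Proof.
rewrite /incl_excl_sum big_ord_recr /= binn subnn fact0 expn0 !muln1 mul1r.
congr (_ + _); rewrite mulr_sumr; apply: eq_bigr => k _.
rewrite bin_fact_pow2S -1?ltnS // !natrM; ring.
Qed.

Lemma dAB_rec m :
  (dAB m.+1)%:Z = 2 * m.+1%:Z * (dAB m)%:Z + (-1) ^+ m.+1 * m.+2%:Z.
Proof.
apply: (@mulfI _ 2) => //.
have := twice_dABE int m; have := twice_dABE int m.+1.
rewrite incl_excl_sumS !natz => -> twice_m; rewrite exprS.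
have -> : incl_excl_sum int m = 2 * (dAB m)%:Z - (-1) ^+ m by rewrite twice_m addrK.
ring.
Qed.

Lemma dAB0 : dAB 0 = 1%N.
Proof.
have := twice_dABE int 0.
by rewrite /incl_excl_sum big_ord1 bin0 subnn fact0 expn0 expr0 mulr1 !natz; lia.
Qed.

Lemma dAB1 : dAB 1 = 0%N.
Proof. by have := dAB_rec 0; rewrite dAB0 /=; lia. Qed.

Lemma dAB2 : dAB 2 = 3%N.
Proof. by have := dAB_rec 1; rewrite dAB1 /=; lia. Qed.

Lemma dAB_rec2 m : (dAB m.+3)%:Z =
  m.+2%:Z * (2 * (dAB m.+2)%:Z + 4 * (dAB m.+1)%:Z + (-1) ^+ m.+2).
Proof. by rewrite (dAB_rec m.+2) (dAB_rec m.+1) !exprS; lia. Qed.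

Lemma dAB_closed n :
  (dAB n)%:Q =
  (n`!)%:Q * (\sum_(k < n) (2 ^ (n - k - 1))%N%:Q * (-1) ^+ k / (k`!)%:Q) + (-1) ^+ n.
Proof.
apply: (@mulfI _ 2) => //.
rewrite -!pmulrn twice_dABE /incl_excl_sum big_ord_recr /= binn subnn fact0 expn0.
rewrite !muln1 mul1r mulrDr -addrA; congr (_ + _); last by ring.
rewrite !mulr_sumr; apply: eq_bigr => k _ /=.
have lt_kn := ltn_ord k.
have pow2E : (2 ^ (n - k) = 2 * 2 ^ (n - k - 1))%N by rewrite -expnS; f_equal; lia.
have fact_neq0 : (k`!)%:R != 0 :> rat by rewrite pnatr_eq0 -lt0n fact_gt0.
by rewrite pow2E -(bin_fact (ltnW lt_kn)) !natrM; field.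
Qed.

Theorem theorem1p2 :
  (forall n : nat, (1 <= n)%N ->
     (dAB n)%:Q =
       (n`!)%:Q * (\sum_(k < n) (2 ^ (n - k - 1))%N%:Q * (-1) ^+ k / (k`!)%:Q)
       + (-1) ^+ n)
  /\
  ((forall n : nat, (2 <= n)%N ->
     (dAB n)%:Z = 2 * n%:Z * (dAB n.-1)%:Z + (-1) ^+ n * (n.+1)%:Z)
   /\ dAB 1 = 0%N)
  /\
  ((forall n : nat, (3 <= n)%N ->
     (dAB n)%:Z = (n.-1)%:Z * (2 * (dAB n.-1)%:Z + 4 * (dAB n.-2)%:Z + (-1) ^+ n.-1))
   /\ dAB 1 = 0%N /\ dAB 2 = 3%N).
Proof.
split; first by move=> n _; exact: dAB_closed.
split; split; rewrite ?dAB1 ?dAB2 //.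
- by case=> [|[|m]] // _; exact: dAB_rec.
- by case=> [|[|[|m]]] // _; exact: dAB_rec2.
Qed.
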